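(* Let $\Gamma=(H,\iota,\sigma,m)$ be a skew Brauer graph, $H'\subseteq H$ stable under $\iota$, and $(h_1,r_1),(h_2,r_2)$ two distinct maximal sectors of elements of $H'$ in $\Gamma$. For any $0$-homogeneous grading $d:H\to\mathbb{Z}/2\mathbb{Z}$ of $\Gamma$, $$\mu^+_{(h_1,r_1)}\big(\mu^+_{(h_2,r_2)}(\Gamma,d)\big)=\mu^+_{(h_2,r_2)}\big(\mu^+_{(h_1,r_1)}(\Gamma,d)\big).$$
   Context: A skew Brauer graph is $\Gamma=(H,\iota,\sigma,m)$ with $H$ finite, $\iota$ an involution (possibly with fixed points; $H_\times$ = set of fixed points, $H_\circ=H\setminus H_\times$), $\sigma$ a permutation, $m:H\to\mathbb{Z}_{>0}$ constant on $\sigma$-orbits; no half-edge is fixed by both $\iota$ and $\sigma$. A grading $d:H\to\mathbb{Z}/2\mathbb{Z}$ is $0$-homogeneous if $\sum_{h\in v}d(h)=0$ for every $\sigma$-orbit $v$. A sector of elements of $H'$ is a pair $(h,r)\in H\times\mathbb{Z}_{\ge0}$ with $r+1$ the least $r'\ge0$ such that $\sigma^{r'}h\notin H'$; it is maximal if also $\sigma^{-1}h\notin H'$. The graded generalized Kauer move of a sector is $\mu^+_{(h,r)}(\Gamma,d)=(H,\iota,\sigma_{(h,r)},m_{(h,r)},d_{(h,r)})$ where $\sigma_{(h,r)}=(h\ \ \sigma^{r+1}h)\circ\sigma\circ(\sigma^rh\ \ \iota\sigma^{r+1}h)$ (permutations applied right to left), $m_{(h,r)}(\sigma^ih)=m(\iota\sigma^{r+1}h)$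 for $0\le i\le r$, $m_{(h,r)}=m$ elsewhere, and, with $\epsilon=0$ if $\sigma^{r+1}h\in H_\circ$ and $\epsilon=1$ if $\sigma^{r+1}h\in H_\times$: $d_{(h,r)}(\iota\sigma^{r+1}h)=-\sum_{i=0}^rd(\sigma^ih)-\epsilon$; $d_{(h,r)}(\sigma^rh)=d(\iota\sigma^{r+1}h)+d(\sigma^rh)+\epsilon$ if $\iota\sigma^{r+1}h\ne\sigma^{-1}h$, and $=\sum_{i=-1}^rd(\sigma^ih)+d(\sigma^rh)+\epsilon$ otherwise; $d_{(h,r)}(\sigma^{-1}h)=\sum_{i=-1}^rd(\sigma^ih)$ if $\iota\sigma^{r+1}h\ne\sigma^{-1}h$, and $=d_{(h,r)}(\iota\sigma^{r+1}h)$ otherwise; $d_{(h,r)}(h')=d(h')$ for all other $h'$. The result is again a $0$-homogeneous graded skew Brauer graph, and a maximal sector distinct from $(h,r)$ remains a sector after the move, so both sides are defined. *)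

From HB Require Import structures.
From mathcomp Require Import all_boot all_order all_fingroup all_algebra.
Set Implicit Arguments. Unset Strict Implicit. Unset Printing Implicit Defensive.
Import GRing.Theory.
Local Open Scope ring_scope.

(* Half-edges: a finType H.  iota, sigma : {perm H}.
   Permutations in MathComp compose left-to-right: (p * q) x = q (p x). *)

Section SkewBrauer.
Variable H : finType.

Definition is_skew_brauer (iota sigma : {perm H}) (m : {ffun H -> nat}) : Prop :=
  [/\ forall x, iota (iota x) = x,
      forall x, (0 < m x)%N,
      forall x y, y \in porbit sigma x -> m y = m x
    & forall x, ~ (iota x = x /\ sigma x = x)].

Definition zero_homogeneous (sigma : {perm H}) (d : {ffun H -> 'Z_2}) : Prop :=
  forall x, \sum_(y in porbit sigma x) d y = 0.

Definition is_sector (sigma : {perm H}) (H' : {set H}) (h : H) (r : nat) : Prop :=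
  (forall i, (i <= r)%N -> (sigma ^+ i)%g h \in H') /\ (sigma ^+ r.+1)%g h \notin H'.

Definition is_maximal_sector (sigma : {perm H}) (H' : {set H}) (h : H) (r : nat) : Prop :=
  is_sector sigma H' h r /\ (sigma^-1)%g h \notin H'.

Record gsbg := GSBG {
  g_iota : {perm H};
  g_sigma : {perm H};
  g_m : {ffun H -> nat};
  g_d : {ffun H -> 'Z_2} }.

Definition kauer_move (G : gsbg) (h : H) (r : nat) : gsbg :=
  let iota := g_iota G in
  let sigma := g_sigma G in
  let m := g_m G in
  let d := g_d G in
  let s i := (sigma ^+ i)%g h in
  let t := s r.+1 in
  let a := iota t in
  let b := s r in
  let c := (sigma^-1)%g h in
  let eps : 'Z_2 := (iota t == t)%:R in   (* 1 iff sigma^{r+1} h in H_x *)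
  let S := \sum_(i < r.+1) d (s i) in
  (* sigma' = (h  t) o sigma o (b  a), composing right to left *)
  let sigma' := (tperm b a * sigma * tperm h t)%g in
  let m' := [ffun x => if [exists i : 'I_r.+1, x == s (nat_of_ord i)]
                       then m a else m x] in
  let da := - S - eps in
  let d' := [ffun x =>
      if x == a then da
      else if x == b then
        (if a != c then d a + d b + eps else (d c + S) + d b + eps)
      else if x == c then
        (if a != c then d c + S else da)
      else d x] in
  GSBG iota sigma' m' d'.

End SkewBrauer.

From mathcomp Require Import all_boot all_order all_fingroup all_algebra.
From mathcomp Require Import ring.
Set Implicit Arguments. Unset Strict Implicit. Unset Printing Implicit Defensive.
Local Open Scope ring_scope.

(* Two distinct maximal sectors of H' are disjoint, and a move at a sector
   (h, r) only alters sigma, m and d at its cells sigma^i h and at the three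
   half-edges sigma^{r+1} h, iota sigma^{r+1} h, sigma^{-1} h, which lie outside
   H'.  Hence after the move at one sector the other sector has the same cells,
   successor and weight; only its predecessor sigma^{-1} h is relabelled by the
   transposition the first move inserts.  The two moves then compose sigma with
   transpositions of disjoint supports, reset m on disjoint sets of cells, and
   the two resulting gradings agree by a finite case analysis in Z/2Z. *)

Section KauerMoves.
Variable H : finType.

Lemma tperm_commute (x y u v : H) :
  x != u -> x != v -> y != u -> y != v -> commute (tperm x y) (tperm u v).
Proof.
move=> xu xv yu yv.
by rewrite /commute conjgC tpermJ !tpermD // eq_sym.
Qed.

Section Sectors.
Variables (sigma : {perm H}) (H' : {set H}).

Definition sector_cells (h : H) (r : nat) : {set H} :=
  [set x | [exists i : 'I_r.+1, x == (sigma ^+ i)%g h]].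

Definition sector_weight (d : {ffun H -> 'Z_2}) (h : H) (r : nat) : 'Z_2 :=
  \sum_(i < r.+1) d ((sigma ^+ i)%g h).

Lemma sector_length_uniq h r1 r2 :
  is_sector sigma H' h r1 -> is_sector sigma H' h r2 -> r1 = r2.
Proof.
move=> [in1 out1] [in2 out2]; case: (ltngtP r1 r2) => // lt_r.
- by rewrite in2 in out1.
- by rewrite in1 in out2.
Qed.

Lemma maximal_sector_mem h r : is_maximal_sector sigma H' h r ->
  [/\ h \in H', (sigma ^+ r)%g h \in H', sector_cells h r \subset H',
      (sigma ^+ r.+1)%g h \notin H' & (sigma^-1)%g h \notin H'].
Proof.
move=> [[in_r out_r] out_prev]; split=> //.
- by have := in_r 0 isT; rewrite expg0 perm1.
- exact: in_r.
- by apply/subsetP=> x; rewrite inE => /existsP [i /eqP ->]; apply: in_r; rewrite -ltnS.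
Qed.

Lemma maximal_sectors_disjoint h1 r1 h2 r2 :
  is_maximal_sector sigma H' h1 r1 -> is_maximal_sector sigma H' h2 r2 ->
  (h1, r1) <> (h2, r2) ->
  forall i j, (i <= r1)%N -> (j <= r2)%N -> (sigma ^+ i)%g h1 != (sigma ^+ j)%g h2.
Proof.
move=> M1 M2 ne i j; wlog le_ij : h1 r1 h2 r2 i j M1 M2 ne / (i <= j)%N.
  move=> wlog_ij; case: (leqP i j) => [|/ltnW] le; first exact: wlog_ij.
  move=> ir jr; rewrite eq_sym (wlog_ij h2 r2 h1 r1) //.
  by move=> eq21; apply/ne/esym.
move=> ir jr; apply/eqP => eq_ij.
have {eq_ij} h1E : h1 = (sigma ^+ (j - i))%g h2.
  by apply: (@perm_inj _ (sigma ^+ i)%g); rewrite eq_ij -permM -expgD subnK.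
case: M1 M2 => [S1 out_prev] [S2 _].
case ji: (j - i)%N h1E => [|k] h1E.
  rewrite expg0 perm1 in h1E; subst h1.
  by apply: ne; rewrite (sector_length_uniq S1 S2).
move: out_prev; rewrite h1E expgSr permM permK (proj1 S2) //.
by apply: leq_trans (leqnSn k) (leq_trans _ jr); rewrite -ji leq_subr.
Qed.

Lemma maximal_sector_cells_disjoint h1 r1 h2 r2 :
  is_maximal_sector sigma H' h1 r1 -> is_maximal_sector sigma H' h2 r2 ->
  (h1, r1) <> (h2, r2) -> [disjoint sector_cells h1 r1 & sector_cells h2 r2].
Proof.
move=> M1 M2 ne; apply/pred0P => x; rewrite /= !inE.
apply/andP => -[/existsP [i /eqP ->] /existsP [j /eqP]]; apply/eqP.
by apply: maximal_sectors_disjoint M1 M2 ne _ _ _ _; rewrite -ltnS.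
Qed.

End Sectors.

Lemma involutive_stable_notin (iota : {perm H}) (H' : {set H}) :
  involutive iota -> (forall x, x \in H' -> iota x \in H') ->
  forall x, x \notin H' -> iota x \notin H'.
Proof. by move=> iotaK iota_H' x; apply: contra => /iota_H'; rewrite iotaK. Qed.

Definition move_grading (d : {ffun H -> 'Z_2}) (a b c : H) (eps S : 'Z_2) :
    {ffun H -> 'Z_2} :=
  [ffun x => if x == a then - S - eps
             else if x == b then
               (if a != c then d a + d b + eps else (d c + S) + d b + eps)
             else if x == c then (if a != c then d c + S else - S - eps)
             else d x].

Lemma move_grading_comm (H' : {set H}) d (a1 b1 c1 a2 b2 c2 : H) e1 e2 S1 S2 :
  b1 \in H' -> b2 \in H' ->
  a1 \notin H' -> a2 \notin H' -> c1 \notin H' -> c2 \notin H' ->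
  b1 != b2 -> a1 != a2 -> c1 != c2 ->
  move_grading (move_grading d a2 b2 c2 e2 S2) a1 b1 (tperm b2 a2 c1) e1 S1 =
  move_grading (move_grading d a1 b1 c1 e1 S1) a2 b2 (tperm b1 a1 c2) e2 S2.
Proof.
move=> b1H b2H a1H a2H c1H c2H /eqP b12 /eqP a12 /eqP c12.
have ne x y : x \in H' -> y \notin H' -> x <> y by move=> xH + exy; rewrite -exy xH.
move: (ne _ _ b1H a1H) (ne _ _ b1H a2H) (ne _ _ b1H c1H) (ne _ _ b1H c2H).
move: (ne _ _ b2H a1H) (ne _ _ b2H a2H) (ne _ _ b2H c1H) (ne _ _ b2H c2H).
move=> {ne b1H b2H a1H a2H c1H c2H H'} *.
(* a1 = c2 and a2 = c1 may happen: one move then overwrites a degree the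
   other one reads. *)
case: tpermP => [?|?|? ?]; case: tpermP => [?|?|? ?]; subst => //.
all: apply/ffunP => x; rewrite !ffunE.
all: by repeat (case: eqP => ?; subst => //=); ring.
Qed.

(* The move with the data it reads off the sector abstracted: for kauer_move G h r,
   t = sigma^{r+1} h, b = sigma^r h, c = sigma^{-1} h, and cells/S are the
   cells of the sector and their total degree (see kauer_moveE). *)
Definition move_at (G : gsbg H) (h t b c : H) (cells : {set H}) (S : 'Z_2) :
    gsbg H :=
  let a := g_iota G t in
  GSBG (g_iota G) (tperm b a * g_sigma G * tperm h t)%g
    [ffun x => if x \in cells then g_m G a else g_m G x]
    (move_grading (g_d G) a b c (a == t)%:R S).

Lemma kauer_moveE G h r :
  kauer_move G h r =
  move_at G h ((g_sigma G ^+ r.+1)%g h) ((g_sigma G ^+ r)%g h) ((g_sigma G)^-1%g h)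
    (sector_cells (g_sigma G) h r) (sector_weight (g_sigma G) (g_d G) h r).
Proof. by congr GSBG; apply/ffunP => x; rewrite !ffunE ?inE. Qed.

Section MoveAtCommute.
Variables (G : gsbg H) (H' : {set H}).
Variables (h1 t1 b1 c1 h2 t2 b2 c2 : H) (cells1 cells2 : {set H}) (S1 S2 : 'Z_2).
Let a1 := g_iota G t1.
Let a2 := g_iota G t2.
Hypotheses (h1H : h1 \in H') (b1H : b1 \in H') (cells1H : cells1 \subset H').
Hypotheses (t1H : t1 \notin H') (a1H : a1 \notin H') (c1H : c1 \notin H').
Hypotheses (h2H : h2 \in H') (b2H : b2 \in H') (cells2H : cells2 \subset H').
Hypotheses (t2H : t2 \notin H') (a2H : a2 \notin H') (c2H : c2 \notin H').
Hypotheses (h12 : h1 != h2) (b12 : b1 != b2) (t12 : t1 != t2) (c12 : c1 != c2).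
Hypothesis cells12 : [disjoint cells1 & cells2].

Let neq_in_out x y : x \in H' -> y \notin H' -> x != y.
Proof. by move=> xH; apply: contraNneq => <-. Qed.

Lemma move_at_comm :
  move_at (move_at G h2 t2 b2 c2 cells2 S2) h1 t1 b1 (tperm b2 a2 c1) cells1 S1 =
  move_at (move_at G h1 t1 b1 c1 cells1 S1) h2 t2 b2 (tperm b1 a1 c2) cells2 S2.
Proof.
have a12 : a1 != a2 by apply: contra t12 => /eqP /perm_inj ->.
rewrite /move_at /= -/a1 -/a2; congr GSBG.
- have commute_b : commute (tperm b1 a1) (tperm b2 a2).
    by apply: tperm_commute => //;
      [exact: neq_in_out | rewrite eq_sym; exact: neq_in_out].
  have commute_h : commute (tperm h1 t1) (tperm h2 t2).
    by apply: tperm_commute => //;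
      [exact: neq_in_out | rewrite eq_sym; exact: neq_in_out].
  by rewrite !mulgA commute_b -!mulgA commute_h.
- apply/ffunP => x; rewrite !ffunE.
  have a1_cells2 : a1 \notin cells2 by apply: contra a1H; apply/subsetP.
  have a2_cells1 : a2 \notin cells1 by apply: contra a2H; apply/subsetP.
  rewrite (negbTE a1_cells2) (negbTE a2_cells1).
  by case: ifP => // x1; rewrite (disjointFr cells12 x1).
- apply: move_grading_comm b1H b2H a1H a2H c1H c2H b12 a12 c12.
Qed.

End MoveAtCommute.

Section SectorAfterMove.
Variables (iota sigma : {perm H}) (m : {ffun H -> nat}) (d : {ffun H -> 'Z_2}).
Variables (H' : {set H}) (h1 h2 : H) (r1 r2 : nat).
Hypotheses (iotaK : involutive iota) (iota_H' : forall x, x \in H' -> iota x \in H').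
Hypotheses (M1 : is_maximal_sector sigma H' h1 r1)
           (M2 : is_maximal_sector sigma H' h2 r2).
Hypothesis sectors12 : (h1, r1) <> (h2, r2).
Let G2 := kauer_move (GSBG iota sigma m d) h2 r2.
Let b2 := (sigma ^+ r2)%g h2.
Let a2 := iota ((sigma ^+ r2.+1)%g h2).

Lemma kauer_move_sigma_in x : x \in H' -> x != b2 -> g_sigma G2 x = sigma x.
Proof.
move=> xH xb2; have [_ _ _ t2H c2H] := maximal_sector_mem M2.
have a2H : a2 \notin H' := involutive_stable_notin iotaK iota_H' t2H.
have a2x : a2 != x by apply: contraNneq a2H => ->.
rewrite /= !permM (tpermD _ a2x) 1?eq_sym // tpermD //.
  by apply: contraNneq c2H => ->; rewrite permK.
by rewrite expgSr permM (inj_eq perm_inj) eq_sym.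
Qed.

Lemma kauer_move_sector_iter i :
  (i <= r1.+1)%N -> (g_sigma G2 ^+ i)%g h1 = (sigma ^+ i)%g h1.
Proof.
have [[in1 _] _] := M1; have disj := maximal_sectors_disjoint M1 M2 sectors12.
elim: i => [|i IH] lt_i; first by rewrite !expg0.
by rewrite !permX !iterS -!permX IH ?(ltnW lt_i) // kauer_move_sigma_in ?in1 ?disj.
Qed.

Lemma kauer_move_sector_prev :
  ((g_sigma G2)^-1)%g h1 = tperm b2 a2 ((sigma^-1)%g h1).
Proof.
have [h1H _ _ _ _] := maximal_sector_mem M1.
have [_ _ _ t2H _] := maximal_sector_mem M2.
have disj := maximal_sectors_disjoint M1 M2 sectors12.
have := disj 0 0 isT isT; rewrite !expg0 !perm1 => h12.
have t2h1 : (sigma ^+ r2.+1)%g h2 != h1 by apply: contraNneq t2H => ->.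
by rewrite /= !invMg !tpermV !permM (tpermD _ t2h1) // eq_sym.
Qed.

Lemma kauer_move_sector_cells :
  sector_cells (g_sigma G2) h1 r1 = sector_cells sigma h1 r1.
Proof.
apply/setP => x; rewrite !inE; apply: eq_existsb => i.
by rewrite kauer_move_sector_iter // ltnW.
Qed.

Lemma kauer_move_sector_weight :
  sector_weight (g_sigma G2) (g_d G2) h1 r1 = sector_weight sigma d h1 r1.
Proof.
have [[in1 _] _] := M1; have [_ _ _ t2H c2H] := maximal_sector_mem M2.
have a2H : a2 \notin H' := involutive_stable_notin iotaK iota_H' t2H.
apply: eq_bigr => i _; rewrite kauer_move_sector_iter ?(ltnW (ltn_ord i)) //= ffunE.
have neq_out y : y \notin H' -> ((sigma ^+ i)%g h1 == y) = false.
  by move=> yH; apply: contraNF yH => /eqP <-; apply: in1; rewrite -ltnS.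
have disj := maximal_sectors_disjoint M1 M2 sectors12.
by rewrite neq_out // (negbTE (disj _ _ _ (leqnn r2))) ?neq_out // -ltnS.
Qed.

Lemma kauer_move_after_moveE :
  kauer_move G2 h1 r1 =
  move_at G2 h1 ((sigma ^+ r1.+1)%g h1) ((sigma ^+ r1)%g h1)
    (tperm b2 a2 ((sigma^-1)%g h1))
    (sector_cells sigma h1 r1) (sector_weight sigma d h1 r1).
Proof.
rewrite kauer_moveE !kauer_move_sector_iter // kauer_move_sector_prev.
by rewrite kauer_move_sector_cells kauer_move_sector_weight.
Qed.

End SectorAfterMove.

End KauerMoves.

Theorem proposition3p15 (H : finType) (iota sigma : {perm H})
    (m : {ffun H -> nat}) (d : {ffun H -> 'Z_2}) (H' : {set H})
    (h1 h2 : H) (r1 r2 : nat) :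
  is_skew_brauer iota sigma m ->
  (forall x, x \in H' -> iota x \in H') ->
  is_maximal_sector sigma H' h1 r1 ->
  is_maximal_sector sigma H' h2 r2 ->
  (h1, r1) <> (h2, r2) ->
  zero_homogeneous sigma d ->
  kauer_move (kauer_move (GSBG iota sigma m d) h2 r2) h1 r1 =
  kauer_move (kauer_move (GSBG iota sigma m d) h1 r1) h2 r2.
Proof.
move=> [iotaK _ _ _] iota_H' M1 M2 ne12 _.
have ne21 : (h2, r2) <> (h1, r1) by move/esym.
rewrite (kauer_move_after_moveE m d iotaK iota_H' M1 M2 ne12).
rewrite (kauer_move_after_moveE m d iotaK iota_H' M2 M1 ne21) !kauer_moveE.
have [h1H b1H cells1H t1H c1H] := maximal_sector_mem M1.
have [h2H b2H cells2H t2H c2H] := maximal_sector_mem M2.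
have iota_out := involutive_stable_notin iotaK iota_H'.
have disj := maximal_sectors_disjoint M1 M2 ne12.
have h12 : h1 != h2 by have := disj 0 0 isT isT; rewrite !expg0 !perm1.
have b12 := disj r1 r2 (leqnn r1) (leqnn r2).
apply: (move_at_comm (H' := H')) => //=; rewrite ?iota_out ?(inj_eq perm_inj) //.
  by rewrite !expgSr !permM (inj_eq perm_inj).
exact: maximal_sector_cells_disjoint M1 M2 ne12.
Qed.
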